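(* For any integer $n\ge0$, $B^*$ maximizes $j$, i.e. $j(D)\le j(B^* )$ for all $D\ge0$, where $$j(D):=\frac{1}{(F_{2n+1}+G_{2n+1})(D)}\left[D^{2n+1}+(B^* )^{2n+1}\frac{G_{2n+1}(D)}{F_{2n+1}(B^* )}\right].$$
   Context: $F_q(y):=\int_0^\infty u^{q-1}e^{yu-u^2/2}\,\mathrm{d}u$ and $G_q(y):=F_q(-y)$. $B^*>0$ is the unique zero of the strictly decreasing function $B\mapsto(2n+1)-BF'_{2n+1}(B)/F_{2n+1}(B)$. Moreover, $\frac{\partial}{\partial B}\frac{B^{2n+1}}{F_{2n+1}(B)}>0$ iff $B<B^*$. *)

From Stdlib Require Import Reals.
From Coquelicot Require Import Coquelicot.
Open Scope R_scope.

Definition F (q : nat) (y : R) : R :=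
  RInt_gen (fun u => u ^ (q - 1) * exp (y * u - u ^ 2 / 2))
           (at_point 0) (Rbar_locally p_infty).

Definition G (q : nat) (y : R) : R := F q (- y).

Definition j (n : nat) (Bs D : R) : R :=
  / (F (2 * n + 1) D + G (2 * n + 1) D) *
  (D ^ (2 * n + 1) + Bs ^ (2 * n + 1) * G (2 * n + 1) D / F (2 * n + 1) Bs).

From Stdlib Require Import Reals Lra Lia Classical_Prop.
From Coquelicot Require Import Coquelicot.
Open Scope R_scope.

(* Write q = 2n+1 and F = F_q.  Since j(B* ) = (B* )^q / F(B* ), clearing denominators
   reduces j(D) <= j(B* ) to D^q F(B* ) <= (B* )^q F(D).  Differentiating under the
   integral gives F' = F_{q+1}, so the critical-point equation reads B* F_{q+1}(B* ) =
   q F(B* ).  Integrating the convexity bound e^t >= e^a (1 + t - a) at t = (D - B* ) u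
   against u^(q-1) e^(B* u - u^2/2) then gives F(D) >= e^a F(B* ) for a = q (D - B* )/B*,
   while x <= e^(x-1) at x = D/B* gives D^q <= (B* )^q e^a. *)

Section RealImproperIntegrals.

Context {Fa Fb : (R -> Prop) -> Prop} {FFa : Filter Fa} {FFb : Filter Fb}.

Lemma is_RInt_gen_Rscal (f : R -> R) (c l : R) :
  is_RInt_gen f Fa Fb l -> is_RInt_gen (fun x => c * f x) Fa Fb (c * l).
Proof. exact (is_RInt_gen_scal f c l). Qed.

Lemma is_RInt_gen_Rplus (f g : R -> R) (lf lg : R) :
  is_RInt_gen f Fa Fb lf -> is_RInt_gen g Fa Fb lg ->
  is_RInt_gen (fun x => f x + g x) Fa Fb (lf + lg).
Proof. exact (is_RInt_gen_plus f g lf lg). Qed.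

Lemma is_RInt_gen_Rminus (f g : R -> R) (lf lg : R) :
  is_RInt_gen f Fa Fb lf -> is_RInt_gen g Fa Fb lg ->
  is_RInt_gen (fun x => f x - g x) Fa Fb (lf - lg).
Proof. exact (is_RInt_gen_minus f g lf lg). Qed.

End RealImproperIntegrals.

Lemma filter_prod_at_point_p_infty (a : R) (P : R * R -> Prop) :
  (forall b, a < b -> P (a, b)) -> filter_prod (at_point a) (Rbar_locally p_infty) P.
Proof.
intros HP.
apply (Filter_prod _ _ _ (fun x => x = a) (fun y => a < y)); [easy | now exists a |].
intros x y -> Hy. now apply HP.
Qed.

Lemma is_RInt_gen_ge_0 (g : R -> R) (a l : R) :
  is_RInt_gen g (at_point a) (Rbar_locally p_infty) l ->
  (forall x, a <= x -> 0 <= g x) -> 0 <= l.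
Proof.
intros Hg Hpos.
apply Rle_trans with (norm (0 * l)); [apply norm_ge_0 |].
apply (RInt_gen_norm (Fa := at_point a) (Fb := Rbar_locally p_infty)
         (fun x => 0 * g x) g (0 * l) l).
- apply filter_prod_at_point_p_infty. intros b Hb. simpl. lra.
- apply filter_prod_at_point_p_infty. intros b _ x [Hx _]. simpl in Hx.
  change (Rabs (0 * g x) <= g x). rewrite Rmult_0_l, Rabs_R0. apply Hpos, Hx.
- now apply is_RInt_gen_Rscal.
- exact Hg.
Qed.

Lemma is_RInt_gen_le (f g : R -> R) (a lf lg : R) :
  is_RInt_gen f (at_point a) (Rbar_locally p_infty) lf ->
  is_RInt_gen g (at_point a) (Rbar_locally p_infty) lg ->
  (forall x, a <= x -> f x <= g x) -> lf <= lg.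
Proof.
intros Hf Hg Hfg.
enough (0 <= lg - lf) by lra.
apply (is_RInt_gen_ge_0 (fun x => g x - f x) a); [now apply is_RInt_gen_Rminus |].
intros x Hx. specialize (Hfg x Hx). lra.
Qed.

Lemma exp_le_compat (x y : R) : x <= y -> exp x <= exp y.
Proof. intros [Hlt | ->]; [now left; apply exp_increasing | apply Rle_refl]. Qed.

Lemma pow_exp (x : R) (k : nat) : exp x ^ k = exp (INR k * x).
Proof.
induction k as [|k IH]; [simpl; now rewrite Rmult_0_l, exp_0 |].
rewrite S_INR, <- tech_pow_Rmult, IH, <- exp_plus. f_equal. ring.
Qed.

Lemma RInt_exp_neg_le (C b : R) :
  0 <= C -> 0 <= b -> RInt (fun x => C * exp (- x)) 0 b <= C.
Proof.
intros HC Hb.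
assert (Hint : is_RInt (fun x => C * exp (- x)) 0 b (- C * exp (- b) - - C * exp (- 0))).
{ apply (is_RInt_derive (fun x => - C * exp (- x))).
  - intros x _. auto_derive; [easy | ring].
  - intros x _. apply (ex_derive_continuous (fun x => C * exp (- x))). now auto_derive. }
rewrite (is_RInt_unique _ _ _ _ Hint), Ropp_0, exp_0.
assert (0 < exp (- b)) by apply exp_pos. nra.
Qed.

(* The integral is the supremum of the partial integrals over [0, b], which are
   nondecreasing in b and bounded by C. *)
Lemma is_RInt_gen_exp_dominated (f : R -> R) (C : R) :
  (forall x, continuous f x) -> (forall x, 0 <= x -> 0 <= f x <= C * exp (- x)) ->
  exists l, is_RInt_gen f (at_point 0) (Rbar_locally p_infty) l /\
    forall b, 0 <= b -> RInt f 0 b <= l.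
Proof.
intros Hcont Hdom.
assert (Hex : forall a b, ex_RInt f a b).
{ intros a b. apply (@ex_RInt_continuous R_CompleteNormedModule). intros; apply Hcont. }
assert (HC : 0 <= C).
{ destruct (Hdom 0 (Rle_refl 0)) as [H0 H1]. assert (0 < exp (- 0)) by apply exp_pos. nra. }
assert (Hmono : forall a b, 0 <= a <= b -> RInt f 0 a <= RInt f 0 b).
{ intros a b Hab. rewrite <- (RInt_Chasles f 0 a b) by apply Hex.
  assert (0 <= RInt f a b) by (apply RInt_ge_0; try lra; try apply Hex;
                                 intros x Hx; apply Hdom; lra).
  change (RInt f 0 a <= RInt f 0 a + RInt f a b). lra. }
assert (Hbound : forall b, 0 <= b -> RInt f 0 b <= C).
{ intros b Hb. eapply Rle_trans; [| apply (RInt_exp_neg_le C b HC Hb)].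
  apply RInt_le; [easy | apply Hex | |].
  - apply (@ex_RInt_continuous R_CompleteNormedModule). intros x _.
    apply (ex_derive_continuous (fun x => C * exp (- x))). now auto_derive.
  - intros x Hx. apply Hdom. lra. }
set (E := fun r => exists b, 0 <= b /\ r = RInt f 0 b).
destruct (completeness E) as [l [Hub Hlub]].
{ exists C. intros r [b [Hb ->]]. now apply Hbound. }
{ exists (RInt f 0 0), 0. split; [lra | easy]. }
exists l. split; [| intros b Hb; apply Hub; now exists b].
intros P [eps Heps].
assert (Happrox : exists b0, 0 <= b0 /\ l - eps < RInt f 0 b0).
{ apply NNPP. intros Hno.
  enough (l <= l - eps) by (destruct eps; simpl in *; lra).
  apply Hlub. intros r [b [Hb ->]]. apply Rnot_lt_le. intros Hlt. apply Hno. now exists b. }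
destruct Happrox as [b0 [Hb0 Hlt]].
apply (Filter_prod _ _ _ (fun x => x = 0) (fun y => b0 < y)); [easy | now exists b0 |].
intros x y -> Hy. exists (RInt f 0 y). split; [apply (@RInt_correct R_CompleteNormedModule), Hex |].
apply Heps.
assert (RInt f 0 y <= l) by (apply Hub; exists y; split; [lra | easy]).
assert (RInt f 0 b0 <= RInt f 0 y) by (apply Hmono; lra).
change (Rabs (RInt f 0 y - l) < eps). rewrite Rabs_left1; lra.
Qed.

Lemma exp_taylor1_bounds (x : R) : 0 <= exp x - 1 - x <= x ^ 2 * exp (Rabs x).
Proof.
assert (H1 := exp_ineq1_le x). assert (H2 := exp_ineq1_le (- x)).
assert (Hinv : exp (- x) * exp x = 1) by (rewrite <- exp_plus, Rplus_opp_l; apply exp_0).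
assert (Hpos := exp_pos x).
assert (H3 : exp x - 1 <= x * exp x) by nra.
split; [lra |].
destruct (Rle_or_lt 0 x) as [Hx | Hx].
- rewrite Rabs_pos_eq by lra. nra.
- assert (H4 := exp_ineq1_le (Rabs x)). assert (0 <= Rabs x) by apply Rabs_pos. nra.
Qed.

Definition gauss_kernel (k : nat) (y u : R) : R := u ^ k * exp (y * u - u ^ 2 / 2).

Definition gauss_moment (k : nat) (y : R) : R :=
  RInt_gen (gauss_kernel k y) (at_point 0) (Rbar_locally p_infty).

Lemma gauss_kernel_continuous (k : nat) (y u : R) : continuous (gauss_kernel k y) u.
Proof. apply (ex_derive_continuous (gauss_kernel k y)). unfold gauss_kernel. now auto_derive. Qed.

Lemma gauss_kernel_ge_0 (k : nat) (y u : R) : 0 <= u -> 0 <= gauss_kernel k y u.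
Proof. intros Hu. apply Rmult_le_pos; [now apply pow_le | left; apply exp_pos]. Qed.

Lemma gauss_kernel_gt_0 (k : nat) (y u : R) : 0 < u -> 0 < gauss_kernel k y u.
Proof. intros Hu. apply Rmult_lt_0_compat; [now apply pow_lt | apply exp_pos]. Qed.

Lemma gauss_kernel_shift (k : nat) (y z u : R) :
  gauss_kernel k (y + z) u = gauss_kernel k y u * exp (z * u).
Proof.
unfold gauss_kernel. rewrite Rmult_assoc, <- exp_plus. do 2 f_equal. ring.
Qed.

Lemma gauss_kernel_S (k : nat) (y u : R) : gauss_kernel (S k) y u = u * gauss_kernel k y u.
Proof. unfold gauss_kernel. simpl. ring. Qed.

(* From u <= e^u and y u - u^2/2 <= (k + y + 1)^2/2 - (k + 1) u. *)
Lemma gauss_kernel_exp_dominated (k : nat) (y u : R) :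
  0 <= u -> 0 <= gauss_kernel k y u <= exp ((INR k + y + 1) ^ 2 / 2) * exp (- u).
Proof.
intros Hu. split; [now apply gauss_kernel_ge_0 |].
assert (Hpow : u ^ k <= exp (INR k * u)).
{ rewrite <- pow_exp. apply pow_incr. assert (H := exp_ineq1_le u). lra. }
apply Rle_trans with (exp (INR k * u) * exp (y * u - u ^ 2 / 2)).
{ apply Rmult_le_compat_r; [left; apply exp_pos | exact Hpow]. }
rewrite <- !exp_plus. apply exp_le_compat.
assert (0 <= (INR k + y + 1 - u) ^ 2) by apply pow2_ge_0. nra.
Qed.

Lemma is_RInt_gen_gauss_moment (k : nat) (y : R) :
  is_RInt_gen (gauss_kernel k y) (at_point 0) (Rbar_locally p_infty) (gauss_moment k y).
Proof.
destruct (is_RInt_gen_exp_dominated (gauss_kernel k y) (exp ((INR k + y + 1) ^ 2 / 2)))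
  as [l [Hl _]].
- apply gauss_kernel_continuous.
- apply gauss_kernel_exp_dominated.
- unfold gauss_moment. now rewrite (is_RInt_gen_unique _ _ Hl).
Qed.

Lemma gauss_moment_gt_0 (k : nat) (y : R) : 0 < gauss_moment k y.
Proof.
destruct (is_RInt_gen_exp_dominated (gauss_kernel k y) (exp ((INR k + y + 1) ^ 2 / 2)))
  as [l [Hl Hsup]].
- apply gauss_kernel_continuous.
- apply gauss_kernel_exp_dominated.
- unfold gauss_moment. rewrite (is_RInt_gen_unique _ _ Hl).
  apply Rlt_le_trans with (RInt (gauss_kernel k y) 0 1); [| apply Hsup; lra].
  apply RInt_gt_0; [lra | intros x Hx; apply gauss_kernel_gt_0; lra |].
  intros x _. apply gauss_kernel_continuous.
Qed.

Lemma gauss_moment_taylor1_bounds (k : nat) (B h : R) :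
  Rabs h <= 1 ->
  0 <= gauss_moment k (B + h) - gauss_moment k B - h * gauss_moment (S k) B
    <= h ^ 2 * gauss_moment (S (S k)) (B + 1).
Proof.
intros Hh.
assert (Hint := is_RInt_gen_Rminus _ _ _ _
  (is_RInt_gen_Rminus _ _ _ _ (is_RInt_gen_gauss_moment k (B + h)) (is_RInt_gen_gauss_moment k B))
  (is_RInt_gen_Rscal _ h _ (is_RInt_gen_gauss_moment (S k) B))).
assert (Hpt : forall u, 0 <= u ->
  0 <= gauss_kernel k (B + h) u - gauss_kernel k B u - h * gauss_kernel (S k) B u
    <= h ^ 2 * gauss_kernel (S (S k)) (B + 1) u).
{ intros u Hu.
  rewrite (gauss_kernel_shift k B h), (gauss_kernel_shift (S (S k)) B 1), !gauss_kernel_S.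
  assert (Hw := gauss_kernel_ge_0 k B u Hu). set (w := gauss_kernel k B u).
  destruct (exp_taylor1_bounds (h * u)) as [Hlo Hhi].
  assert (Rabs (h * u) <= u) by (rewrite Rabs_mult, (Rabs_pos_eq u) by lra; nra).
  assert (exp (Rabs (h * u)) <= exp (1 * u)) by (apply exp_le_compat; lra).
  assert (0 <= w * (exp (h * u) - 1 - h * u)) by now apply Rmult_le_pos.
  assert (w * (exp (h * u) - 1 - h * u) <= w * (h ^ 2 * (u * u) * exp (1 * u))).
  { apply Rmult_le_compat_l; [exact Hw |]. eapply Rle_trans; [exact Hhi |].
    replace ((h * u) ^ 2) with (h ^ 2 * (u * u)) by ring.
    apply Rmult_le_compat_l; [nra | assumption]. }
  split; nra. }
split.
- apply (is_RInt_gen_ge_0 _ 0 _ Hint). intros u Hu. apply Hpt, Hu.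
- apply (is_RInt_gen_le _ _ 0 _ _ Hint
    (is_RInt_gen_Rscal _ (h ^ 2) _ (is_RInt_gen_gauss_moment (S (S k)) (B + 1)))).
  intros u Hu. apply Hpt, Hu.
Qed.

Lemma is_derive_gauss_moment (k : nat) (B : R) :
  is_derive (gauss_moment k) B (gauss_moment (S k) B).
Proof.
apply is_derive_Reals. intros eps Heps.
set (M := gauss_moment (S (S k)) (B + 1)).
assert (HM : 0 < M) by apply gauss_moment_gt_0.
assert (Hdelta : 0 < Rmin 1 (eps / M)) by (apply Rmin_pos; [lra | now apply Rdiv_lt_0_compat]).
exists (mkposreal _ Hdelta). intros h Hh0 Hh. simpl in Hh.
assert (Hh1 : Rabs h <= 1) by (assert (Rmin 1 (eps / M) <= 1) by apply Rmin_l; lra).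
assert (Hh2 : Rabs h * M < eps).
{ assert (Rmin 1 (eps / M) <= eps / M) by apply Rmin_r.
  apply Rlt_le_trans with (eps / M * M); [apply Rmult_lt_compat_r; lra |].
  right. field. lra. }
assert (Hhpos : 0 < Rabs h) by now apply Rabs_pos_lt.
destruct (gauss_moment_taylor1_bounds k B h Hh1) as [Hlo Hhi]. fold M in Hhi.
replace ((gauss_moment k (B + h) - gauss_moment k B) / h - gauss_moment (S k) B)
  with ((gauss_moment k (B + h) - gauss_moment k B - h * gauss_moment (S k) B) / h)
  by (field; exact Hh0).
unfold Rdiv. rewrite Rabs_mult, Rabs_inv, (Rabs_pos_eq (_ - _ - _)) by exact Hlo.
apply Rmult_lt_reg_r with (Rabs h); [exact Hhpos |].
rewrite Rmult_assoc, Rinv_l, Rmult_1_r by lra.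
replace (h ^ 2) with (Rabs h * Rabs h) in Hhi by (rewrite <- Rabs_mult, Rabs_pos_eq; nra).
nra.
Qed.

(* Integrates the convexity bound e^t >= e^a (1 + t - a) at t = (D - B) u. *)
Lemma gauss_moment_tangent_bound (k : nat) (B D a : R) :
  exp a * ((1 - a) * gauss_moment k B + (D - B) * gauss_moment (S k) B) <= gauss_moment k D.
Proof.
replace (exp a * ((1 - a) * gauss_moment k B + (D - B) * gauss_moment (S k) B))
  with (exp a * (1 - a) * gauss_moment k B + exp a * (D - B) * gauss_moment (S k) B) by ring.
apply (is_RInt_gen_le _ _ 0 _ _
  (is_RInt_gen_Rplus _ _ _ _
     (is_RInt_gen_Rscal _ (exp a * (1 - a)) _ (is_RInt_gen_gauss_moment k B))
     (is_RInt_gen_Rscal _ (exp a * (D - B)) _ (is_RInt_gen_gauss_moment (S k) B)))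
  (is_RInt_gen_gauss_moment k D)).
intros u Hu.
rewrite gauss_kernel_S.
replace (gauss_kernel k D u) with (gauss_kernel k B u * exp ((D - B) * u))
  by (rewrite <- gauss_kernel_shift; f_equal; ring).
assert (Hw := gauss_kernel_ge_0 k B u Hu). set (w := gauss_kernel k B u).
assert (Htangent : exp a * (1 + ((D - B) * u - a)) <= exp ((D - B) * u)).
{ replace (exp ((D - B) * u)) with (exp a * exp ((D - B) * u - a))
    by (rewrite <- exp_plus; f_equal; ring).
  apply Rmult_le_compat_l; [left; apply exp_pos | apply exp_ineq1_le]. }
assert (H := Rmult_le_compat_l w _ _ Hw Htangent).
nra.
Qed.

Lemma F_S (k : nat) (y : R) : F (S k) y = gauss_moment k y.
Proof. unfold F. now rewrite Nat.sub_1_r. Qed.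

Lemma F_gt_0 (q : nat) (y : R) : (0 < q)%nat -> 0 < F q y.
Proof. destruct q as [|k]; [lia | intros _; rewrite F_S; apply gauss_moment_gt_0]. Qed.

Lemma Derive_F_S (k : nat) (y : R) : Derive (F (S k)) y = gauss_moment (S k) y.
Proof.
apply is_derive_unique, (is_derive_ext (gauss_moment k)); [intros t; now rewrite F_S |].
apply is_derive_gauss_moment.
Qed.

(* From x <= e^(x - 1) at x = D / B. *)
Lemma pow_le_mul_exp (q : nat) (B D : R) :
  0 < B -> 0 <= D -> D ^ q <= B ^ q * exp (INR q * (D - B) / B).
Proof.
intros HB HD.
assert (Hratio : 0 <= D / B) by now apply Rdiv_le_0_compat.
replace (INR q * (D - B) / B) with (INR q * (D / B - 1)) by (field; lra).
rewrite <- pow_exp.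
replace D with (B * (D / B)) at 1 by (field; lra).
rewrite Rpow_mult_distr. apply Rmult_le_compat_l; [apply pow_le; lra |].
apply pow_incr. assert (H := exp_ineq1_le (D / B - 1)). lra.
Qed.

Lemma gauss_moment_pow_cross_le (k : nat) (B D : R) :
  0 < B -> 0 <= D -> B * gauss_moment (S k) B = INR (S k) * gauss_moment k B ->
  D ^ S k * gauss_moment k B <= B ^ S k * gauss_moment k D.
Proof.
intros HB HD Hcrit.
set (a := INR (S k) * (D - B) / B).
assert (HFB := gauss_moment_gt_0 k B).
assert (Htangent := gauss_moment_tangent_bound k B D a).
replace ((1 - a) * gauss_moment k B + (D - B) * gauss_moment (S k) B)
  with (gauss_moment k B) in Htangent.
2: { replace (gauss_moment (S k) B) with (INR (S k) * gauss_moment k B / B)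
       by (rewrite <- Hcrit; field; lra).
     unfold a. field. lra. }
apply Rle_trans with (B ^ S k * exp a * gauss_moment k B).
- apply Rmult_le_compat_r; [lra | now apply pow_le_mul_exp].
- rewrite Rmult_assoc. apply Rmult_le_compat_l; [apply pow_le; lra | exact Htangent].
Qed.

Lemma j_le_j_Bs (n : nat) (Bs D : R) :
  0 < Bs -> D ^ (2 * n + 1) * F (2 * n + 1) Bs <= Bs ^ (2 * n + 1) * F (2 * n + 1) D ->
  j n Bs D <= j n Bs Bs.
Proof.
intros HB Hcross. unfold j, G.
set (q := (2 * n + 1)%nat) in *.
assert (Hq : (0 < q)%nat) by (unfold q; lia).
assert (HFD := F_gt_0 q D Hq). assert (HGD := F_gt_0 q (- D) Hq).
assert (HFB := F_gt_0 q Bs Hq). assert (HGB := F_gt_0 q (- Bs) Hq).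
assert (HBq : 0 < Bs ^ q) by now apply pow_lt.
replace (/ (F q Bs + F q (- Bs)) * (Bs ^ q + Bs ^ q * F q (- Bs) / F q Bs))
  with (Bs ^ q * (F q D + F q (- D)) / (F q Bs * (F q D + F q (- D)))) by (field; lra).
replace (/ (F q D + F q (- D)) * (D ^ q + Bs ^ q * F q (- D) / F q Bs))
  with ((D ^ q * F q Bs + Bs ^ q * F q (- D)) / (F q Bs * (F q D + F q (- D))))
  by (field; lra).
apply Rmult_le_compat_r; [left; apply Rinv_0_lt_compat; nra |].
lra.
Qed.

Theorem lemma4p2 (n : nat) (Bs : R) :
  0 < Bs ->
  INR (2 * n + 1) - Bs * Derive (F (2 * n + 1)) Bs / F (2 * n + 1) Bs = 0 ->
  forall D : R, 0 <= D -> j n Bs D <= j n Bs Bs.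
Proof.
intros HB Hcrit D HD.
apply j_le_j_Bs; [exact HB |].
replace (2 * n + 1)%nat with (S (2 * n)) in * by lia.
rewrite Derive_F_S, !F_S in Hcrit. rewrite !F_S.
apply gauss_moment_pow_cross_le; [exact HB | exact HD |].
assert (HF := gauss_moment_gt_0 (2 * n) Bs).
apply Rminus_diag_uniq in Hcrit. rewrite Hcrit. field. lra.
Qed.
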